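(* Let $f(z)=\sum_{k=0}^\infty a_k z^k$ be an entire function with $a_k>0$ for all $k$ and $a_0=a_1=1$, satisfying the hypotheses: $3\le q_2\le q_3\le q_4\le\cdots$, and for every integer $j_0\ge 2$ with $q_{j_0}<4$ and $q_{j_0+1}\ge 4$, either $q_{j_0}\ge 3.4303$ or ($j_0\ge 3$ and $q_{j_0-1}/q_{j_0+1}\ge 0.525$). Let $\varphi(z):=f(-z)$ and, for $k\ge 2$, $\rho_k:=q_2q_3\cdots q_k\sqrt{q_{k+1}}$. Then for every $k\ge 2$, $$(-1)^k\varphi(\rho_k)\ge 0.$$
   Context: Here $q_n:=\frac{a_{n-1}^2}{a_{n-2}a_n}$ for $n\ge 2$ (these are the same for $f$ and $\varphi$ ). With $a_0=a_1=1$, $\varphi(z)=1-z+\sum_{k=2}^\infty \frac{(-1)^k z^k}{q_2^{k-1}q_3^{k-2}\cdots q_{k-1}^2 q_k}$. *)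

From Stdlib Require Import Reals.
From Coquelicot Require Import Coquelicot.
Open Scope R_scope.

Definition qseq (a : nat -> R) (n : nat) : R :=
  (a (n - 1)%nat) ^ 2 / (a (n - 2)%nat * a n).

Fixpoint prod_from2 (q : nat -> R) (k : nat) : R :=
  match k with
  | O => 1
  | S O => 1
  | S m => prod_from2 q m * q (S m)
  end.

Definition rho (q : nat -> R) (k : nat) : R := prod_from2 q k * sqrt (q (S k)).

Definition phi (a : nat -> R) (x : R) : R := PSeries a (- x).

From Stdlib Require Import Reals Lra Psatz Lia.
From Coquelicot Require Import Coquelicot.
Open Scope R_scope.

(* Put x := rho_k = P_k sqrt(q_{k+1}) with P_k := q_2 ... q_k and
   t_j := a_j x^j > 0, so that (-1)^k phi(x) = sum_j (-1)^(k+j) t_j.  Since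
   a_{j+1} = a_j / P_{j+1}, consecutive terms satisfy t_{j+1} = r_j t_j with
   r_j := x / P_{j+1}, and r_j = q_{j+2} r_{j+1}; hence the t_j increase up to
   j = k and decrease afterwards, with r_{k-1} = 1/p and r_k = p, p := q_{k+1}^(-1/2).
   Cutting the series at k, the head is an alternating sum of increasing terms
   ending with +t_k and the tail an alternating series of decreasing terms, so
   both can be truncated after three terms (Leibniz).  Expressing those terms
   through t_k, p, u := 1/q_k and v := 1/q_{k+2} gives
        (-1)^k phi(rho_k) >= t_k * margin p u v. *)

(* The quantity whose sign decides the sign of (-1)^k phi(rho_k); the bracketed
   parts come from the head (u) and from the tail (v) of the series. *)
Definition margin (p u v : R) : R :=
  1 - 2 * p + (p ^ 2 * u - p ^ 3 * u ^ 2 / 3) + (p ^ 2 * v - p ^ 3 * v ^ 3).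

Lemma margin_mono (p u u' v v' : R) :
  0 <= p <= 1 -> 0 <= u <= u' -> u' <= 1 / 3 -> 0 <= v <= v' -> v' <= 1 / 3 ->
  margin p u v <= margin p u' v'.
Proof.
  intros Hp Hu Hu' Hv Hv'.
  assert (Hp3 : p ^ 3 <= p ^ 2) by (simpl; nra).
  assert (Hp3' : 0 <= p ^ 3) by (apply pow_le; lra).
  assert (0 <= (u' - u) * (p ^ 2 - p ^ 3 * (u + u') / 3)) by (apply Rmult_le_pos; nra).
  assert (Hvv : v ^ 2 + v * v' + v' ^ 2 <= 1 / 3) by nra.
  assert (0 <= (v' - v) * (p ^ 2 - p ^ 3 * (v ^ 2 + v * v' + v' ^ 2))) by (apply Rmult_le_pos; nra).
  unfold margin. nra.
Qed.

Lemma pow_gap (p p0 : R) (m : nat) :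
  0 <= p <= p0 -> p0 ^ S m - p ^ S m <= (p0 - p) * (INR (S m) * p0 ^ m).
Proof.
  intros Hp. induction m as [|m IH].
  - simpl. lra.
  - assert (p ^ S m <= p0 ^ S m) by (apply pow_incr; lra).
    assert (0 <= p0 - p) by lra.
    rewrite S_INR. simpl pow in *. nra.
Qed.

(* The three one-variable estimates: each polynomial is positive at the right
   endpoint p0 of the range of p and decreases on [0, p0]. *)
Lemma margin_at_quarter (p : R) : 0 <= p -> p ^ 2 <= 1 / 3 -> 0 <= margin p (p ^ 2) (1 / 4).
Proof.
  intros Hp Hp2. set (p0 := 5774 / 10000).
  assert (Hle : 0 <= p <= p0) by (unfold p0; nra).
  pose proof (pow_gap p p0 1 Hle). pose proof (pow_gap p p0 3 Hle).
  assert (p ^ 3 <= p0 ^ 3) by (apply pow_incr; lra).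
  assert (p ^ 7 <= p0 ^ 7) by (apply pow_incr; lra).
  unfold margin, p0 in *. cbn [INR] in *. lra.
Qed.

Lemma margin_at_zero (p : R) : 0 <= p -> p ^ 2 <= 10000 / 34303 -> 0 <= margin p (p ^ 2) 0.
Proof.
  intros Hp Hp2. set (p0 := 53993 / 100000).
  assert (Hle : 0 <= p <= p0) by (unfold p0; nra).
  pose proof (pow_gap p p0 3 Hle).
  assert (p ^ 7 <= p0 ^ 7) by (apply pow_incr; lra).
  unfold margin, p0 in *. cbn [INR] in *. lra.
Qed.

Lemma margin_at_ratio (p : R) : 0 <= p -> p ^ 2 <= 1 / 3 ->
  0 <= margin p (p ^ 2) (525 / 1000 * p ^ 2).
Proof.
  intros Hp Hp2. set (p0 := 5774 / 10000).
  assert (Hle : 0 <= p <= p0) by (unfold p0; nra).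
  pose proof (pow_gap p p0 3 Hle).
  assert (p ^ 7 <= p0 ^ 7) by (apply pow_incr; lra).
  assert (p ^ 9 <= p0 ^ 9) by (apply pow_incr; lra).
  unfold margin, p0 in *. cbn [INR] in *. lra.
Qed.

(* margin is nonnegative at p = q_{k+1}^(-1/2), u = 1/q_k, v = 1/q_{k+2} under
   the monotonicity of q and the case distinction coming from the hypothesis on j0. *)
Lemma margin_nonneg (Q0 Q1 Q2 : R) :
  3 <= Q0 -> Q0 <= Q1 -> Q1 <= Q2 ->
  Q2 <= 4 \/ 34303 / 10000 <= Q1 \/ 525 / 1000 <= Q0 / Q2 ->
  0 <= margin (/ sqrt Q1) (/ Q0) (/ Q2).
Proof.
  intros HQ0 HQ01 HQ12 Hcase.
  set (p := / sqrt Q1).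
  assert (Hp0 : 0 < p) by (apply Rinv_0_lt_compat, sqrt_lt_R0; lra).
  assert (Hp2 : p ^ 2 = / Q1).
  { unfold p. rewrite pow_inv, <- Rsqr_pow2, Rsqr_sqrt by lra. reflexivity. }
  assert (Hu : p ^ 2 <= / Q0) by (rewrite Hp2; apply Rinv_le_contravar; lra).
  assert (Hu3 : / Q0 <= 1 / 3) by (rewrite Rdiv_1_l; apply Rinv_le_contravar; lra).
  assert (Hv0 : 0 <= / Q2) by (left; apply Rinv_0_lt_compat; lra).
  assert (Hv : / Q2 <= p ^ 2) by (rewrite Hp2; apply Rinv_le_contravar; lra).
  assert (Hp1 : p <= 1) by nra.
  destruct Hcase as [H4 | [Hbig | Hratio]].
  - apply Rle_trans with (margin p (p ^ 2) (1 / 4)).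
    + apply margin_at_quarter; lra.
    + apply margin_mono; try lra.
      split; [lra |]. rewrite Rdiv_1_l. apply Rinv_le_contravar; lra.
  - apply Rle_trans with (margin p (p ^ 2) 0).
    + apply margin_at_zero; [lra |].
      rewrite Hp2, <- (Rinv_div 34303 10000). apply Rinv_le_contravar; lra.
    + apply margin_mono; lra.
  - apply Rle_trans with (margin p (p ^ 2) (525 / 1000 * p ^ 2)).
    + apply margin_at_ratio; lra.
    + assert (525 / 1000 * / Q0 <= / Q2).
      { apply (Rmult_le_reg_r (Q0 * Q2)); [nra |].
        replace (525 / 1000 * / Q0 * (Q0 * Q2)) with (525 / 1000 * Q2) by (field; lra).
        replace (/ Q2 * (Q0 * Q2)) with (Q0) by (field; lra).
        apply (Rmult_le_compat_r Q2) in Hratio; [| lra].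
        replace (Q0 / Q2 * Q2) with Q0 in Hratio by (field; lra). lra. }
      apply margin_mono; nra.
Qed.

Definition alt_sum (g : nat -> R) (n : nat) : R :=
  sum_f_R0 (fun j => (-1) ^ (n + j) * g j) n.

Lemma minus_one_pow_sq (k : nat) : (-1) ^ k * (-1) ^ k = 1.
Proof. rewrite <- pow_add. replace (k + k)%nat with (2 * k)%nat by lia. apply pow_1_even. Qed.

Lemma alt_sum_S (g : nat -> R) (n : nat) : alt_sum g (S n) = g (S n) - alt_sum g n.
Proof.
  unfold alt_sum. rewrite tech5.
  rewrite (sum_eq _ (fun j => (-1) ^ (n + j) * g j * -1)).
  - rewrite <- scal_sum, pow_add, minus_one_pow_sq. ring.
  - intros j _. simpl. ring.
Qed.

Lemma alt_sum_bounds (g : nat -> R) (n : nat) :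
  0 <= g 0%nat -> (forall j, (j < n)%nat -> g j <= g (S j)) -> 0 <= alt_sum g n <= g n.
Proof.
  intros Hg0. induction n as [|n IH]; intros Hinc.
  - unfold alt_sum. simpl. lra.
  - rewrite alt_sum_S.
    assert (0 <= alt_sum g n <= g n) by (apply IH; auto).
    specialize (Hinc n (Nat.lt_succ_diag_r n)). lra.
Qed.

Lemma alt_sum_lower (g : nat -> R) (n : nat) (theta : R) :
  0 <= theta -> 0 <= g 0%nat -> (forall j, (j < n)%nat -> g j <= g (S j)) ->
  (forall m, n = S m -> g m <= theta * g n) ->
  (1 - theta) * g n <= alt_sum g n.
Proof.
  intros Htheta Hg0 Hinc Hprev. destruct n as [|m].
  - unfold alt_sum. simpl. nra.
  - rewrite alt_sum_S.
    assert (0 <= alt_sum g m <= g m) by (apply alt_sum_bounds; auto).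
    specialize (Hprev m eq_refl). lra.
Qed.

Lemma alt_series_le3 (c : nat -> R) :
  (forall m, 0 <= c m) -> (forall m, c (S m) <= c m) -> ex_series c ->
  Series (tg_alt c) <= c 0%nat - c 1%nat + c 2%nat.
Proof.
  intros Hc0 Hdecr Hex.
  assert (Hex_alt : ex_series (tg_alt c)).
  { apply ex_series_Rabs. revert Hex. apply ex_series_ext. intro m.
    unfold tg_alt. rewrite Rabs_mult, pow_1_abs, Rmult_1_l, Rabs_pos_eq; auto. }
  pose proof (Series_correct _ Hex_alt) as Hsum. apply is_series_Reals in Hsum.
  destruct (alternated_series_ineq c (Series (tg_alt c)) 1 Hdecr) as [_ Hle].
  - apply is_lim_seq_Reals, ex_series_lim_0, Hex.
  - exact Hsum.
  - replace (sum_f_R0 (tg_alt c) (2 * 1)) with (c 0%nat - c 1%nat + c 2%nat) in Hle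
      by (unfold tg_alt; simpl; ring).
    exact Hle.
Qed.

Lemma ex_series_entire (a : nat -> R) (x : R) :
  CV_radius a = p_infty -> ex_series (fun j => a j * x ^ j).
Proof.
  intros Hentire.
  assert (H : ex_pseries a x) by (apply CV_radius_inside; rewrite Hentire; exact I).
  revert H. apply ex_series_ext. intro j.
  rewrite pow_n_pow. apply Rmult_comm.
Qed.

Lemma phi_split (a : nat -> R) (x : R) (k : nat) :
  CV_radius a = p_infty ->
  (-1) ^ k * phi a x =
  alt_sum (fun j => a j * x ^ j) k - Series (tg_alt (fun m => a (S k + m)%nat * x ^ (S k + m))).
Proof.
  intros Hentire.
  assert (Hneg : forall j, (- x) ^ j = (-1) ^ j * x ^ j).
  { intro j. rewrite <- Rpow_mult_distr. f_equal. ring. }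
  unfold phi, PSeries.
  rewrite (Series_incr_n _ (S k)) by (lia || apply ex_series_entire, Hentire).
  simpl pred. rewrite Rmult_plus_distr_l, scal_sum, <- Series_scal_l.
  unfold Rminus. rewrite <- Series_opp. unfold alt_sum. f_equal.
  - apply sum_eq. intros j _. rewrite Hneg, pow_add. ring.
  - apply Series_ext. intro m. unfold tg_alt. rewrite Hneg, !pow_add.
    transitivity (- ((-1) ^ k * (-1) ^ k) * ((-1) ^ m * (a (S k + m)%nat * (x ^ S k * x ^ m)))).
    + simpl. ring.
    + rewrite minus_one_pow_sq. ring.
Qed.

Lemma prod_from2_succ (q : nat -> R) (n : nat) :
  (1 <= n)%nat -> prod_from2 q (S n) = prod_from2 q n * q (S n).
Proof. intros Hn. destruct n as [|n]; [lia | reflexivity]. Qed.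

Section Coefficients.

Variable a : nat -> R.
Hypothesis Hpos : forall k, 0 < a k.
Hypothesis H0 : a 0%nat = 1.
Hypothesis H1 : a 1%nat = 1.
Hypothesis Hq2 : 3 <= qseq a 2.
Hypothesis Hmono : forall n, (2 <= n)%nat -> qseq a n <= qseq a (S n).

Local Notation q := (qseq a).
Local Notation P := (prod_from2 (qseq a)).

Lemma q_ge3 (n : nat) : (2 <= n)%nat -> 3 <= q n.
Proof.
  intros Hn. induction Hn as [|n Hn IH]; [exact Hq2 |].
  specialize (Hmono n Hn). lra.
Qed.

Lemma P_ge1 (n : nat) : 1 <= P n.
Proof.
  induction n as [|[|n] IH]; try (simpl; lra).
  rewrite prod_from2_succ by lia. pose proof (q_ge3 (S (S n)) ltac:(lia)). nra.
Qed.

Lemma P_mono (n m : nat) : (n <= m)%nat -> P n <= P m.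
Proof.
  intros Hnm. induction Hnm as [|m Hnm IH]; [lra |].
  destruct m as [|m]; [simpl in *; lra |].
  rewrite prod_from2_succ by lia.
  pose proof (P_ge1 (S m)). pose proof (q_ge3 (S (S m)) ltac:(lia)). nra.
Qed.

(* With a_0 = a_1 = 1 the products telescope: P (n+1) = a_n / a_{n+1}. *)
Lemma P_succ_ratio (n : nat) : P (S n) = a n / a (S n).
Proof.
  induction n as [|n IH].
  - simpl. rewrite H0, H1. field.
  - rewrite prod_from2_succ, IH by lia. unfold qseq.
    replace (S (S n) - 1)%nat with (S n) by lia.
    replace (S (S n) - 2)%nat with n by lia.
    pose proof (Hpos n); pose proof (Hpos (S n)); pose proof (Hpos (S (S n))).
    field. lra.
Qed.

Hypothesis Hentire : CV_radius a = p_infty.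

Variable n : nat.
Let k := S (S n).
Let s := sqrt (q (S k)).
Let x := P k * s.
Let t (j : nat) : R := a j * x ^ j.
Let r (j : nat) : R := x / P (S j).
Let p := / s.
Let u := / q k.
Let v := / q (S (S k)).

Lemma s_sq : s * s = q (S k).
Proof. apply sqrt_sqrt. pose proof (q_ge3 (S k) ltac:(unfold k; lia)). lra. Qed.

Lemma s_ge1 : 1 <= s.
Proof.
  pose proof s_sq. pose proof (sqrt_pos (q (S k))) as Hs0. fold s in Hs0.
  pose proof (q_ge3 (S k) ltac:(unfold k; lia)). nra.
Qed.

Lemma x_pos : 0 < x.
Proof. pose proof (P_ge1 k). pose proof s_ge1. unfold x. nra. Qed.

Lemma t_pos (j : nat) : 0 < t j.
Proof. apply Rmult_lt_0_compat; [apply Hpos | apply pow_lt, x_pos]. Qed.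

Lemma t_succ (j : nat) : t (S j) = t j * r j.
Proof.
  unfold t, r. rewrite P_succ_ratio. pose proof (Hpos j). pose proof (Hpos (S j)).
  simpl. field. lra.
Qed.

Lemma r_succ (j : nat) : r j = r (S j) * q (S (S j)).
Proof.
  unfold r. rewrite (prod_from2_succ _ (S j)) by lia.
  pose proof (P_ge1 (S j)). pose proof (q_ge3 (S (S j)) ltac:(lia)). field. lra.
Qed.

Lemma r_nonneg (j : nat) : 0 <= r j.
Proof.
  unfold r. pose proof x_pos. pose proof (P_ge1 (S j)).
  apply Rle_mult_inv_pos; lra.
Qed.

Lemma r_mul (j : nat) : r j * P (S j) = x.
Proof. unfold r. pose proof (P_ge1 (S j)). field. lra. Qed.

Lemma r_ge1 (j : nat) : (j < k)%nat -> 1 <= r j.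
Proof.
  intros Hj. pose proof (P_ge1 (S j)). pose proof (P_mono (S j) k Hj).
  pose proof (P_ge1 k). pose proof s_ge1.
  apply (Rmult_le_reg_r (P (S j))); [lra |]. rewrite r_mul. unfold x. nra.
Qed.

Lemma r_le1 (j : nat) : (k <= j)%nat -> r j <= 1.
Proof.
  intros Hj. pose proof (P_ge1 (S j)). pose proof (P_mono (S k) (S j) ltac:(lia)).
  pose proof (P_ge1 k). pose proof s_ge1. pose proof s_sq.
  rewrite (prod_from2_succ _ k) in * by (unfold k; lia).
  apply (Rmult_le_reg_r (P (S j))); [lra |]. rewrite r_mul. unfold x. nra.
Qed.

Lemma r_before_k : r (S n) * p = 1.
Proof.
  unfold r, p, x. fold k. pose proof (P_ge1 k). pose proof s_ge1. field. lra.
Qed.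

Lemma r_at_k : r k = p.
Proof.
  unfold r, p, x. rewrite prod_from2_succ by (unfold k; lia). rewrite <- s_sq.
  pose proof (P_ge1 k). pose proof s_ge1. field. lra.
Qed.

Lemma head_bound : t k * (1 - p + (p ^ 2 * u - p ^ 3 * u ^ 2 / 3)) <= alt_sum t k.
Proof.
  replace (alt_sum t k) with (t k - (t (S n) - alt_sum t n))
    by (unfold k; rewrite !alt_sum_S; reflexivity).
  pose proof r_before_k as Hrp.
  assert (Hu : u * q k = 1)
    by (unfold u; pose proof (q_ge3 k ltac:(unfold k; lia)); field; lra).
  assert (Hp : 0 <= p) by (unfold p; pose proof s_ge1; left; apply Rinv_0_lt_compat; lra).
  assert (Hu0 : 0 <= u) by (unfold u; pose proof (q_ge3 k ltac:(unfold k; lia));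
                            left; apply Rinv_0_lt_compat; lra).
  assert (Hprev : t (S n) = p * t k).
  { unfold k. rewrite (t_succ (S n)). transitivity (t (S n) * (r (S n) * p)); [rewrite Hrp |]; ring. }
  assert (Hprev2 : t n = p * u * t (S n)).
  { rewrite t_succ, (r_succ n).
    transitivity (t n * (r (S n) * p) * (u * q k)); [rewrite Hrp, Hu | unfold k]; ring. }
  assert (Hlow : (1 - p * u / 3) * t n <= alt_sum t n).
  { apply alt_sum_lower.
    - apply Rmult_le_pos; [apply Rmult_le_pos |]; lra.
    - left; apply t_pos.
    - intros j Hj. rewrite t_succ. pose proof (t_pos j).
      pose proof (r_ge1 j ltac:(unfold k; lia)). nra.
    - intros m Hnm. pose proof (t_pos m). pose proof (q_ge3 (S n) ltac:(lia)).
      assert (Hm : p * u * t n = t m * q (S n)).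
      { transitivity (t m * (r (S n) * p) * (u * q k) * q (S n)); [| rewrite Hrp, Hu; ring].
        rewrite Hnm, t_succ, (r_succ m), (r_succ (S m)). unfold k. rewrite Hnm. ring. }
      nra. }
  assert (Heq : (1 - p * u / 3) * t n = t k * (p ^ 2 * u - p ^ 3 * u ^ 2 / 3))
    by (rewrite Hprev2, Hprev; field).
  lra.
Qed.

Lemma tail_bound :
  Series (tg_alt (fun m => t (S k + m)%nat)) <= t k * (p - (p ^ 2 * v - p ^ 3 * v ^ 3)).
Proof.
  assert (Hv : v * q (S (S k)) = 1)
    by (unfold v; pose proof (q_ge3 (S (S k)) ltac:(lia)); field; lra).
  assert (Hv0 : 0 <= v) by (unfold v; pose proof (q_ge3 (S (S k)) ltac:(lia));
                            left; apply Rinv_0_lt_compat; lra).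
  assert (Hp : 0 <= p) by (unfold p; pose proof s_ge1; left; apply Rinv_0_lt_compat; lra).
  assert (Hr1 : r (S k) = p * v).
  { rewrite <- r_at_k, (r_succ k). transitivity (r (S k) * (v * q (S (S k)))); [rewrite Hv |]; ring. }
  assert (Hr2 : r (S (S k)) <= p * v ^ 2).
  { pose proof (r_succ (S k)) as Hrs. pose proof (Hmono (S (S k)) ltac:(lia)).
    pose proof (r_nonneg (S (S k))). pose proof (q_ge3 (S (S k)) ltac:(lia)).
    assert (r (S (S k)) * q (S (S k)) <= p * v) by nra.
    replace (p * v ^ 2) with (p * v * v) by ring. rewrite <- Hv in *. nra. }
  apply Rle_trans with (t (S k + 0)%nat - t (S k + 1)%nat + t (S k + 2)%nat).
  - apply alt_series_le3.
    + intro m. left. apply t_pos.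
    + intro m. replace (S k + S m)%nat with (S (S k + m)) by lia. rewrite t_succ.
      pose proof (t_pos (S k + m)). pose proof (r_le1 (S k + m) ltac:(lia)). nra.
    + apply (ex_series_incr_n (fun j => a j * x ^ j) (S k)), ex_series_entire, Hentire.
  - replace (S k + 0)%nat with (S k) by lia.
    replace (S k + 1)%nat with (S (S k)) by lia.
    replace (S k + 2)%nat with (S (S (S k))) by lia.
    rewrite !t_succ, r_at_k, Hr1.
    assert (Hc1 : 0 <= t k * p * (p * v)).
    { pose proof (t_pos k). apply Rmult_le_pos; apply Rmult_le_pos; lra. }
    pose proof (Rmult_le_compat_l _ _ _ Hc1 Hr2). lra.
Qed.

Lemma phi_sign_of_margin : 0 <= margin p u v -> 0 <= (-1) ^ k * phi a (rho q k).
Proof.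
  intros Hm. change (rho q k) with x. rewrite phi_split by exact Hentire.
  change (0 <= alt_sum t k - Series (tg_alt (fun m => t (S k + m)%nat))).
  pose proof head_bound. pose proof tail_bound.
  assert (0 <= t k * margin p u v) by (apply Rmult_le_pos; [left; apply t_pos | exact Hm]).
  unfold margin in *. lra.
Qed.
End Coefficients.

Theorem lemma4 (a : nat -> R)
  (Hpos : forall k, 0 < a k)
  (H0 : a 0%nat = 1) (H1 : a 1%nat = 1)
  (Hentire : CV_radius a = p_infty)
  (Hq2 : 3 <= qseq a 2)
  (Hmono : forall n, (2 <= n)%nat -> qseq a n <= qseq a (S n))
  (Hj0 : forall j0 : nat, (2 <= j0)%nat ->
      qseq a j0 < 4 -> 4 <= qseq a (S j0) ->
      34303 / 10000 <= qseq a j0 \/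
      ((3 <= j0)%nat /\ 525 / 1000 <= qseq a (j0 - 1)%nat / qseq a (S j0))) :
  forall k : nat, (2 <= k)%nat -> 0 <= (-1) ^ k * phi a (rho (qseq a) k).
Proof.
  intros k Hk. destruct k as [|[|n]]; [lia | lia |].
  apply (phi_sign_of_margin a Hpos H0 H1 Hq2 Hmono Hentire n).
  apply margin_nonneg; [apply (q_ge3 a Hq2 Hmono); lia | apply Hmono; lia | apply Hmono; lia |].
  (* The case distinction is the hypothesis on j0 applied at j0 = k + 1. *)
  destruct (Rle_lt_dec (qseq a (S (S (S (S n))))) 4) as [Hle4 | Hgt4]; [now left | right].
  destruct (Rle_lt_dec 4 (qseq a (S (S (S n))))) as [Hge4 | Hlt4]; [left; lra |].
  destruct (Hj0 (S (S (S n))) ltac:(lia) Hlt4 (Rlt_le _ _ Hgt4)) as [Hbig | [_ Hratio]].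
  - now left.
  - right. exact Hratio.
Qed.
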